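(* Let $d\ge2$, $w>0$ and $v\ge0$. For unit vectors $\boldsymbol{u}_1,\dots,\boldsymbol{u}_d\in\mathbb{R}^d$ (random vectors $\boldsymbol{w}_i=w\boldsymbol{u}_i$ all having the same length $w$) define $$\rho(\boldsymbol{u}_1,\dots,\boldsymbol{u}_d)=\frac{\Gamma(\frac d2)}{d(d-1)}\sum_{i=1}^d\sum_{j\ne i}\sum_{k=0}^\infty\frac{v^{2k}w^{2k}\|\boldsymbol{u}_i+\boldsymbol{u}_j\|_2^{2k}}{2^{2k}k!\,\Gamma(k+\frac d2)}.$$ Then $\rho$ (and its expectation, if the directions $\boldsymbol{u}_i$ are chosen randomly) is minimised when the ensemble has simplex geometry, i.e. when $\boldsymbol{u}_i^\top\boldsymbol{u}_j=-\frac{1}{d-1}$ for all $i\ne j$ (equivalently, all pairs subtend equal angles and $\sum_i\boldsymbol{u}_i=0$).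
   Context: This is the RF-conformity $\rho(\boldsymbol{x},\boldsymbol{y})$ of an ensemble of $d$ random vectors of common norm $w$, where $v=\|\boldsymbol{x}+\boldsymbol{y}\|_2$. *)

From Stdlib Require Import Reals List Arith.
From Coquelicot Require Import Coquelicot.
Import ListNotations.
Open Scope R_scope.

Definition Gamma (x : R) : R :=
  RInt_gen (fun t => Rpower t (x - 1) * exp (- t)) (at_right 0) (Rbar_locally p_infty).

Definition fsum (n : nat) (f : nat -> R) : R :=
  fold_right Rplus 0 (map f (seq 0 n)).

(* Vectors of R^d are represented by functions nat -> R; only coordinates 0..d-1 matter. *)
Definition dot (d : nat) (x y : nat -> R) : R := fsum d (fun k => x k * y k).
Definition norm2 (d : nat) (x : nat -> R) : R := sqrt (dot d x x).
Definition vadd (x y : nat -> R) : nat -> R := fun k => x k + y k.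

(* An ensemble of d directions u_0, ..., u_{d-1} in R^d: u i is the i-th vector. *)
Definition unit_ensemble (d : nat) (u : nat -> nat -> R) : Prop :=
  forall i, (i < d)%nat -> norm2 d (u i) = 1.

Definition simplex_ensemble (d : nat) (u : nat -> nat -> R) : Prop :=
  unit_ensemble d u /\
  forall i j, (i < d)%nat -> (j < d)%nat -> i <> j ->
    dot d (u i) (u j) = - 1 / (INR d - 1).

Definition rho_term (d : nat) (w v : R) (x : nat -> R) (k : nat) : R :=
  v ^ (2 * k) * w ^ (2 * k) * (norm2 d x) ^ (2 * k)
  / (2 ^ (2 * k) * INR (fact k) * Gamma (INR k + INR d / 2)).

Definition rho (d : nat) (w v : R) (u : nat -> nat -> R) : R :=
  Gamma (INR d / 2) / (INR d * (INR d - 1)) *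
  fsum d (fun i => fsum d (fun j =>
    if Nat.eqb i j then 0 else Series (rho_term d w v (vadd (u i) (u j))))).

(* Writing [t_ij = |u_i + u_j|^2 = 2 + 2 <u_i, u_j>], the conformity is a positive multiple of
   [sum_k c_k sum_(i <> j) t_ij^k] with coefficients [c_k >= 0] (positivity of Gamma).  For each [k],
   the convex function [t ^ k] lies above its tangent at the simplex value [tau = 2 (d-2)/(d-1)];
   summing the tangent bounds over the pairs leaves [sum_(i <> j) <u_i, u_j> = |sum_i u_i|^2 - d >= -d],
   which is exactly what makes the bound equal to the simplex value [d (d-1) tau^k]. *)

From Stdlib Require Import Reals Lra Lia List Arith Classical_Prop.
From Coquelicot Require Import Coquelicot.
Open Scope R_scope.

Lemma is_RInt_gen_nonneg_bounded (f : R -> R) (c M : R) :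
  (forall a b, c < a <= b -> ex_RInt f a b) ->
  (forall x, c < x -> 0 <= f x) ->
  (forall a b, c < a <= b -> RInt f a b <= M) ->
  exists I, is_RInt_gen f (at_right c) (Rbar_locally p_infty) I /\
    (forall a b, c < a <= b -> RInt f a b <= I).
Proof.
  intros Hex Hpos HM.
  (* [I] is the supremum of the partial integrals, which [f >= 0] makes monotone in both endpoints. *)
  set (E := fun y => exists a b, c < a <= b /\ y = RInt f a b).
  assert (HE_bound : bound E) by (exists M; intros y (a & b & Hab & ->); auto).
  assert (HE_inhab : exists y, E y) by (exists (RInt f (c + 1) (c + 1)), (c + 1), (c + 1); split; [lra | easy]).
  destruct (completeness E HE_bound HE_inhab) as [I [HI_ub HI_least]].
  assert (Hle : forall a b, c < a <= b -> RInt f a b <= I) by (intros a b Hab; apply HI_ub; now exists a, b).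
  exists I; split; [| exact Hle].
  intros P [eps Heps].
  assert (Happrox : exists a0 b0, c < a0 <= b0 /\ I - eps < RInt f a0 b0).
  { apply NNPP; intros Hnot.
    assert (I <= I - eps).
    { apply HI_least; intros y (a & b & Hab & ->).
      apply Rnot_lt_le; intros Hlt; apply Hnot; now exists a, b. }
    destruct eps; simpl in *; lra. }
  destruct Happrox as (a0 & b0 & Hab0 & Hlt).
  apply (Filter_prod _ _ _ (fun a => c < a < a0) (fun b => b0 < b)).
  - assert (Hdelta : 0 < a0 - c) by lra.
    exists (mkposreal _ Hdelta); intros y Hy Hcy.
    change (Rabs (y - c) < a0 - c) in Hy.
    apply Rabs_def2 in Hy; lra.
  - now exists b0.
  - intros a b Ha Hb; simpl.
    exists (RInt f a b); split; [apply (RInt_correct (V := R_CompleteNormedModule)), Hex; lra |].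
    apply Heps.
    assert (Hsplit : RInt f a b = RInt f a a0 + RInt f a0 b0 + RInt f b0 b).
    { rewrite <- (RInt_Chasles f a a0 b), <- (RInt_Chasles f a0 b0 b) by (apply Hex; lra).
      unfold plus; simpl; ring. }
    assert (0 <= RInt f a a0) by (apply RInt_ge_0; [lra | apply Hex; lra | intros; apply Hpos; lra]).
    assert (0 <= RInt f b0 b) by (apply RInt_ge_0; [lra | apply Hex; lra | intros; apply Hpos; lra]).
    assert (RInt f a b <= I) by (apply Hle; lra).
    change (Rabs (RInt f a b - I) < eps).
    apply Rabs_def1; destruct eps; simpl in *; lra.
Qed.

Definition Gamma_integrand (x t : R) : R := Rpower t (x - 1) * exp (- t).

Lemma Gamma_integrand_nonneg x t : 0 <= Gamma_integrand x t.
Proof. unfold Gamma_integrand, Rpower. apply Rmult_le_pos; left; apply exp_pos. Qed.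

Lemma ex_RInt_Gamma_integrand x a b : 0 < a <= b -> ex_RInt (Gamma_integrand x) a b.
Proof.
  intros Hab. apply (ex_RInt_continuous (V := R_CompleteNormedModule)).
  intros t Ht. rewrite Rmin_left in Ht by lra.
  apply (ex_derive_continuous (Gamma_integrand x)), ex_derive_mult.
  - exists ((x - 1) * Rpower t (x - 1 - 1)).
    apply is_derive_Reals, derivable_pt_lim_power; lra.
  - auto_derive; auto.
Qed.

Lemma exp_le_compat a b : a <= b -> exp a <= exp b.
Proof. intros [Hlt | ->]; [left; now apply exp_increasing | right; reflexivity]. Qed.

Lemma ln_le_sub1 z : 0 < z -> ln z <= z - 1.
Proof. intros Hz. pose proof (exp_ineq1_le (ln z)) as H. rewrite exp_ln in H by exact Hz. lra. Qed.

(* Write [t = (t / c) c] with [c = 2 x - 1] and use [ln (t / c) <= t / c - 1]. *)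
Lemma Gamma_integrand_le x t : 1 <= x -> 0 < t ->
  Gamma_integrand x t <= Rpower (2 * x - 1) (x - 1) * exp (- t / 2).
Proof.
  intros Hx Ht. unfold Gamma_integrand, Rpower. rewrite <- !exp_plus.
  apply exp_le_compat.
  set (c := 2 * x - 1).
  assert (Hc : 0 < c) by (unfold c; lra).
  assert (Hln : ln t = ln (t / c) + ln c) by (rewrite ln_div by assumption; ring).
  pose proof (ln_le_sub1 (t / c) ltac:(apply Rdiv_lt_0_compat; lra)) as Hlog.
  assert (Hfrac : (x - 1) * (t / c) <= t / 2).
  { assert (t / 2 - (x - 1) * (t / c) = t / (2 * c)) by (unfold c; field; lra).
    assert (0 < t / (2 * c)) by (apply Rdiv_lt_0_compat; lra). lra. }
  rewrite Hln. nra.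
Qed.

Lemma is_RInt_exp_neg_half C a b :
  is_RInt (fun t => C * exp (- t / 2)) a b (2 * C * (exp (- a / 2) - exp (- b / 2))).
Proof.
  replace (2 * C * (exp (- a / 2) - exp (- b / 2))) with
    (minus (-2 * C * exp (- b / 2)) (-2 * C * exp (- a / 2)))
    by (unfold minus, plus, opp; simpl; ring).
  apply (is_RInt_derive (V := R_CompleteNormedModule) (fun t => -2 * C * exp (- t / 2))).
  - intros t _. auto_derive; auto. lra.
  - intros t _. apply (ex_derive_continuous (fun t => C * exp (- t / 2))). auto_derive; auto.
Qed.

Lemma RInt_Gamma_integrand_le x a b : 1 <= x -> 0 < a <= b ->
  RInt (Gamma_integrand x) a b <= 2 * Rpower (2 * x - 1) (x - 1).
Proof.
  intros Hx Hab. set (C := Rpower (2 * x - 1) (x - 1)).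
  assert (HC : 0 < C) by apply exp_pos.
  pose proof (is_RInt_exp_neg_half C a b) as Hexp.
  apply Rle_trans with (2 * C * (exp (- a / 2) - exp (- b / 2))).
  - rewrite <- (is_RInt_unique _ _ _ _ Hexp).
    apply RInt_le; [lra | now apply ex_RInt_Gamma_integrand | now exists (2 * C * (exp (- a / 2) - exp (- b / 2))) |].
    intros t Ht. apply Gamma_integrand_le; lra.
  - pose proof (exp_pos (- b / 2)).
    pose proof (exp_increasing (- a / 2) 0 ltac:(lra)) as Ha. rewrite exp_0 in Ha.
    nra.
Qed.

Lemma RInt_Gamma_integrand_1_2 x : 1 <= x -> exp (-2) <= RInt (Gamma_integrand x) 1 2.
Proof.
  intros Hx.
  apply Rle_trans with (RInt (fun _ => exp (-2)) 1 2).
  - rewrite RInt_const. unfold scal; simpl; unfold mult; simpl. lra.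
  - apply RInt_le; [lra | apply ex_RInt_const | apply ex_RInt_Gamma_integrand; lra |].
    intros t Ht. unfold Gamma_integrand.
    assert (1 <= Rpower t (x - 1)).
    { rewrite <- exp_0 at 1. unfold Rpower. apply exp_le_compat, Rmult_le_pos; [lra |].
      rewrite <- ln_1. apply ln_le; lra. }
    assert (exp (-2) <= exp (- t)) by (apply exp_le_compat; lra).
    pose proof (exp_pos (-2)). nra.
Qed.

Lemma Gamma_ge_exp_m2 x : 1 <= x -> exp (-2) <= Gamma x.
Proof.
  intros Hx.
  destruct (is_RInt_gen_nonneg_bounded (Gamma_integrand x) 0 (2 * Rpower (2 * x - 1) (x - 1)))
    as (I & HI & Hdom).
  - apply ex_RInt_Gamma_integrand.
  - intros; apply Gamma_integrand_nonneg.
  - intros; now apply RInt_Gamma_integrand_le.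
  - change (exp (-2) <= RInt_gen (Gamma_integrand x) (at_right 0) (Rbar_locally p_infty)).
    rewrite (is_RInt_gen_unique (Gamma_integrand x) I HI).
    apply Rle_trans with (RInt (Gamma_integrand x) 1 2).
    + now apply RInt_Gamma_integrand_1_2.
    + apply Hdom; lra.
Qed.

Lemma Gamma_pos x : 1 <= x -> 0 < Gamma x.
Proof. intros Hx. apply Rlt_le_trans with (exp (-2)); [apply exp_pos | now apply Gamma_ge_exp_m2]. Qed.

Lemma le_2_INR n : (2 <= n)%nat -> 2 <= INR n.
Proof. intros Hn. apply le_INR in Hn. simpl in Hn. lra. Qed.

Lemma fold_right_Rplus_init a l : fold_right Rplus a l = a + fold_right Rplus 0 l.
Proof. induction l as [| x l IH]; simpl; [ring | rewrite IH; ring]. Qed.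

Lemma fsum_S n f : fsum (S n) f = fsum n f + f n.
Proof.
  unfold fsum. rewrite seq_S, map_app, fold_right_app. simpl.
  rewrite fold_right_Rplus_init. ring.
Qed.

Lemma fsum_ext n f g : (forall k, (k < n)%nat -> f k = g k) -> fsum n f = fsum n g.
Proof. induction n; intros H; [reflexivity |]. rewrite !fsum_S, IHn, H; auto. Qed.

Lemma fsum_le n f g : (forall k, (k < n)%nat -> f k <= g k) -> fsum n f <= fsum n g.
Proof.
  induction n; intros H; [apply Rle_refl |].
  rewrite !fsum_S. apply Rplus_le_compat; auto.
Qed.

Lemma fsum_plus n f g : fsum n (fun k => f k + g k) = fsum n f + fsum n g.
Proof. induction n; [unfold fsum; simpl; ring |]. rewrite !fsum_S, IHn. ring. Qed.

Lemma fsum_scal_l n c f : fsum n (fun k => c * f k) = c * fsum n f.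
Proof. induction n; [unfold fsum; simpl; ring |]. rewrite !fsum_S, IHn. ring. Qed.

Lemma fsum_const n c : fsum n (fun _ => c) = INR n * c.
Proof. induction n; [unfold fsum; simpl; ring |]. rewrite !fsum_S, IHn, S_INR. ring. Qed.

Lemma fsum_swap n m f :
  fsum n (fun i => fsum m (fun j => f i j)) = fsum m (fun j => fsum n (fun i => f i j)).
Proof.
  induction n.
  - rewrite (fsum_ext m _ (fun _ => 0)), fsum_const by reflexivity. unfold fsum; simpl; ring.
  - rewrite fsum_S, IHn, <- fsum_plus. apply fsum_ext. intros j _. now rewrite fsum_S.
Qed.

Definition kronecker (i j : nat) : R := if Nat.eqb i j then 1 else 0.

Lemma fsum_kronecker n i h : (i < n)%nat -> fsum n (fun j => kronecker i j * h j) = h i.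
Proof.
  induction n; intros Hi; [lia |].
  rewrite fsum_S. unfold kronecker at 2. destruct (Nat.eqb_spec i n) as [-> | Hne].
  - rewrite (fsum_ext n _ (fun _ => 0)), fsum_const; [ring |].
    intros k Hk. unfold kronecker. destruct (Nat.eqb_spec n k); [lia | ring].
  - rewrite IHn by lia. ring.
Qed.

Definition offdiag_sum (n : nat) (f : nat -> nat -> R) : R :=
  fsum n (fun i => fsum n (fun j => if Nat.eqb i j then 0 else f i j)).

Lemma offdiag_sum_diag n f :
  offdiag_sum n f = fsum n (fun i => fsum n (f i)) - fsum n (fun i => f i i).
Proof.
  unfold offdiag_sum. unfold Rminus. rewrite <- (Rmult_1_l (fsum n (fun i => f i i))).
  rewrite Ropp_mult_distr_l, <- fsum_scal_l, <- fsum_plus. apply fsum_ext. intros i Hi.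
  rewrite <- (fsum_kronecker n i (f i)) by exact Hi.
  rewrite <- fsum_scal_l, <- fsum_plus. apply fsum_ext. intros j _.
  unfold kronecker. destruct (Nat.eqb i j); ring.
Qed.

Lemma offdiag_sum_le n f g :
  (forall i j, (i < n)%nat -> (j < n)%nat -> i <> j -> f i j <= g i j) ->
  offdiag_sum n f <= offdiag_sum n g.
Proof.
  intros H. apply fsum_le. intros i Hi. apply fsum_le. intros j Hj.
  destruct (Nat.eqb_spec i j); [apply Rle_refl | auto].
Qed.

Lemma offdiag_sum_ext n f g :
  (forall i j, (i < n)%nat -> (j < n)%nat -> i <> j -> f i j = g i j) ->
  offdiag_sum n f = offdiag_sum n g.
Proof.
  intros H. apply Rle_antisym; apply offdiag_sum_le; intros; rewrite H by assumption; apply Rle_refl.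
Qed.

Lemma offdiag_sum_scal_l n c f : offdiag_sum n (fun i j => c * f i j) = c * offdiag_sum n f.
Proof.
  unfold offdiag_sum. rewrite <- fsum_scal_l. apply fsum_ext. intros i _.
  rewrite <- fsum_scal_l. apply fsum_ext. intros j _. destruct (Nat.eqb i j); ring.
Qed.

Lemma offdiag_sum_const n c : offdiag_sum n (fun _ _ => c) = INR n * (INR n - 1) * c.
Proof. rewrite offdiag_sum_diag, !fsum_const. ring. Qed.

Lemma is_series_zero : is_series (fun _ => 0) 0.
Proof.
  assert (Hq : Rabs (1 / 2) < 1) by (rewrite Rabs_pos_eq; lra).
  pose proof (is_series_scal_l (V := R_NormedModule) 0 _ _ (is_series_geom _ Hq)) as H.
  unfold scal in H; simpl in H; unfold mult in H; simpl in H. rewrite Rmult_0_l in H.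
  exact (is_series_ext _ _ _ (fun k => Rmult_0_l _) H).
Qed.

Lemma is_series_fsum n (a : nat -> nat -> R) (l : nat -> R) :
  (forall i, (i < n)%nat -> is_series (a i) (l i)) ->
  is_series (fun k => fsum n (fun i => a i k)) (fsum n l).
Proof.
  induction n; intros H; [apply is_series_zero |].
  apply (is_series_ext (fun k => plus (fsum n (fun i => a i k)) (a n k))).
  - intros k. now rewrite fsum_S.
  - rewrite fsum_S. apply (is_series_plus (V := R_NormedModule)); auto.
Qed.

Lemma is_series_offdiag_sum n (a : nat -> nat -> nat -> R) (l : nat -> nat -> R) :
  (forall i j, (i < n)%nat -> (j < n)%nat -> is_series (a i j) (l i j)) ->
  is_series (fun k => offdiag_sum n (fun i j => a i j k)) (offdiag_sum n l).
Proof.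
  intros H. apply is_series_fsum. intros i Hi.
  apply (is_series_fsum n (fun j k => if Nat.eqb i j then 0 else a i j k)). intros j Hj.
  destruct (Nat.eqb i j); [apply is_series_zero | auto].
Qed.

Lemma dot_self_nonneg d x : 0 <= dot d x x.
Proof.
  unfold dot. rewrite <- (Rmult_0_r (INR d)), <- fsum_const.
  apply fsum_le. intros. apply Rle_0_sqr.
Qed.

Lemma dot_vadd_self d x y : dot d (vadd x y) (vadd x y) = dot d x x + 2 * dot d x y + dot d y y.
Proof. unfold dot, vadd. rewrite <- fsum_scal_l, <- !fsum_plus. apply fsum_ext. intros; ring. Qed.

Lemma fsum_fsum_dot d n (u : nat -> nat -> R) :
  fsum n (fun i => fsum n (fun j => dot d (u i) (u j))) =
  dot d (fun k => fsum n (fun i => u i k)) (fun k => fsum n (fun i => u i k)).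
Proof.
  unfold dot.
  rewrite (fsum_ext n _ (fun i => fsum d (fun k => u i k * fsum n (fun j => u j k)))).
  - rewrite fsum_swap. apply fsum_ext. intros k _.
    rewrite (fsum_ext n _ (fun i => fsum n (fun j => u j k) * u i k)) by (intros; ring).
    apply fsum_scal_l.
  - intros i _. rewrite fsum_swap. apply fsum_ext. intros k _. now rewrite fsum_scal_l.
Qed.

Lemma unit_ensemble_dot_self d u i : unit_ensemble d u -> (i < d)%nat -> dot d (u i) (u i) = 1.
Proof.
  intros Hu Hi. pose proof (Hu i Hi) as H. unfold norm2 in H.
  rewrite <- (sqrt_sqrt (dot d (u i) (u i))) by apply dot_self_nonneg. rewrite H. ring.
Qed.

Lemma unit_ensemble_dot_vadd d u i j : unit_ensemble d u -> (i < d)%nat -> (j < d)%nat ->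
  dot d (vadd (u i) (u j)) (vadd (u i) (u j)) = 2 + 2 * dot d (u i) (u j).
Proof. intros Hu Hi Hj. rewrite dot_vadd_self, !unit_ensemble_dot_self by assumption. ring. Qed.

(* Centred standard basis vectors [e_i - (1/d) sum_j e_j], rescaled to unit length. *)
Definition simplex_vertex (d i : nat) (k : nat) : R :=
  sqrt (INR d / (INR d - 1)) * (kronecker i k - / INR d).

Lemma dot_simplex_vertex d i j : (2 <= d)%nat -> (i < d)%nat -> (j < d)%nat ->
  dot d (simplex_vertex d i) (simplex_vertex d j) = INR d / (INR d - 1) * (kronecker j i - / INR d).
Proof.
  intros Hd Hi Hj. pose proof (le_2_INR d Hd) as HD.
  set (q := INR d / (INR d - 1)). set (c := / INR d).
  assert (Hq : sqrt q * sqrt q = q) by (apply sqrt_sqrt; unfold q; apply Rlt_le, Rdiv_lt_0_compat; lra).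
  unfold dot, simplex_vertex. fold q c.
  rewrite (fsum_ext d _ (fun k => kronecker i k * (q * kronecker j k - q * c)
                                  + (- q * c) * (kronecker j k * 1) + q * c * c)).
  - rewrite !fsum_plus, fsum_kronecker, fsum_scal_l, fsum_kronecker, fsum_const by assumption.
    unfold c. field. lra.
  - intros k _. transitivity ((kronecker i k - c) * (kronecker j k - c) * (sqrt q * sqrt q)); [ring |].
    rewrite Hq. ring.
Qed.

Lemma simplex_vertex_ensemble d : (2 <= d)%nat -> simplex_ensemble d (simplex_vertex d).
Proof.
  intros Hd. pose proof (le_2_INR d Hd) as HD. split.
  - intros i Hi. unfold norm2. rewrite dot_simplex_vertex by assumption.
    unfold kronecker. rewrite Nat.eqb_refl.
    replace (INR d / (INR d - 1) * (1 - / INR d)) with 1 by (field; lra). apply sqrt_1.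
  - intros i j Hi Hj Hij. rewrite dot_simplex_vertex by assumption.
    unfold kronecker. destruct (Nat.eqb_spec j i); [lia |]. field. lra.
Qed.

Lemma pow_tangent_le k t t0 : 0 <= t -> 0 <= t0 ->
  t0 ^ k + INR k * t0 ^ pred k * (t - t0) <= t ^ k.
Proof.
  intros Ht Ht0. destruct k as [| p]; [simpl; lra |]. simpl pred.
  induction p as [| p IH]; [simpl; lra |].
  rewrite S_INR in *.
  assert (Hp : 0 <= INR p) by apply pos_INR.
  assert (Ha : 0 <= t0 ^ p) by (apply pow_le; lra).
  assert (Hstep : t * (t0 ^ S p + (INR p + 1) * t0 ^ p * (t - t0)) <= t * t ^ S p)
    by (apply Rmult_le_compat_l; lra).
  assert (Hsq : 0 <= t0 ^ p * (INR p + 1) * ((t - t0) * (t - t0))).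
  { apply Rmult_le_pos; [apply Rmult_le_pos; lra | apply Rle_0_sqr]. }
  assert (Hid : t0 ^ S (S p) + (INR (S p) + 1) * t0 ^ S p * (t - t0)
              = t * (t0 ^ S p + (INR p + 1) * t0 ^ p * (t - t0))
                - t0 ^ p * (INR p + 1) * ((t - t0) * (t - t0)))
    by (rewrite S_INR; simpl; ring).
  change (t ^ S (S p)) with (t * t ^ S p). lra.
Qed.

Definition simplex_pair_sqnorm (d : nat) : R := 2 * (INR d - 2) / (INR d - 1).

Lemma simplex_pair_sqnorm_nonneg d : (2 <= d)%nat -> 0 <= simplex_pair_sqnorm d.
Proof.
  intros Hd. pose proof (le_2_INR d Hd).
  unfold simplex_pair_sqnorm. apply Rmult_le_pos; [lra | apply Rlt_le, Rinv_0_lt_compat; lra].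
Qed.

Definition pair_moment (d : nat) (u : nat -> nat -> R) (k : nat) : R :=
  offdiag_sum d (fun i j => dot d (vadd (u i) (u j)) (vadd (u i) (u j)) ^ k).

Lemma pair_moment_simplex d s k : (2 <= d)%nat -> simplex_ensemble d s ->
  pair_moment d s k = INR d * (INR d - 1) * simplex_pair_sqnorm d ^ k.
Proof.
  intros Hd [Hu Hs]. pose proof (le_2_INR d Hd) as HD.
  rewrite <- offdiag_sum_const. apply offdiag_sum_ext. intros i j Hi Hj Hij.
  rewrite unit_ensemble_dot_vadd, Hs by assumption.
  unfold simplex_pair_sqnorm. f_equal. field. lra.
Qed.

Lemma pair_moment_ge d u k : (2 <= d)%nat -> unit_ensemble d u ->
  INR d * (INR d - 1) * simplex_pair_sqnorm d ^ k <= pair_moment d u k.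
Proof.
  intros Hd Hu. pose proof (le_2_INR d Hd) as HD.
  set (tau := simplex_pair_sqnorm d).
  assert (Htau : 0 <= tau) by now apply simplex_pair_sqnorm_nonneg.
  set (K := INR k * tau ^ pred k).
  assert (HK : 0 <= K) by (apply Rmult_le_pos; [apply pos_INR | apply pow_le; lra]).
  set (alpha := tau ^ k + K * (2 - tau)).
  set (G := fsum d (fun i => fsum d (fun j => dot d (u i) (u j)))).
  assert (HG : 0 <= G) by (unfold G; rewrite fsum_fsum_dot; apply dot_self_nonneg).
  assert (Hlin : offdiag_sum d (fun i j => alpha + 2 * K * dot d (u i) (u j))
                 = INR d * (INR d - 1) * alpha - INR d * (2 * K) + 2 * K * G).
  { rewrite offdiag_sum_diag.
    rewrite (fsum_ext d (fun i => alpha + 2 * K * dot d (u i) (u i)) (fun _ => alpha + 2 * K))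
      by (intros i Hi; rewrite unit_ensemble_dot_self by assumption; ring).
    rewrite (fsum_ext d _ (fun i => INR d * alpha + 2 * K * fsum d (fun j => dot d (u i) (u j))))
      by (intros i _; rewrite fsum_plus, fsum_const, fsum_scal_l; ring).
    rewrite fsum_plus, !fsum_const, fsum_scal_l. unfold G. ring. }
  assert (Hcancel : INR d * (INR d - 1) * alpha - INR d * (2 * K) = INR d * (INR d - 1) * tau ^ k).
  { unfold alpha, tau, simplex_pair_sqnorm. field. lra. }
  apply Rle_trans with (offdiag_sum d (fun i j => alpha + 2 * K * dot d (u i) (u j))).
  - rewrite Hlin, <- Hcancel. assert (0 <= 2 * K * G) by (apply Rmult_le_pos; lra). lra.
  - apply offdiag_sum_le. intros i j Hi Hj _.
    pose proof (pow_tangent_le k _ tau (dot_self_nonneg d (vadd (u i) (u j))) Htau) as Htan.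
    rewrite unit_ensemble_dot_vadd in Htan at 1 by assumption.
    fold K in Htan. unfold alpha. lra.
Qed.

Definition rho_coef (d : nat) (w v : R) (k : nat) : R :=
  ((v * w / 2) ^ 2) ^ k / (INR (fact k) * Gamma (INR k + INR d / 2)).

Lemma rho_term_eq d w v x k : rho_term d w v x k = rho_coef d w v k * dot d x x ^ k.
Proof.
  unfold rho_term, rho_coef, norm2.
  rewrite !pow_mult, pow2_sqrt by apply dot_self_nonneg.
  unfold Rdiv. rewrite !Rpow_mult_distr, !pow_inv, !Rinv_mult. ring.
Qed.

Lemma rho_coef_nonneg d w v k : (2 <= d)%nat -> 0 <= rho_coef d w v k.
Proof.
  intros Hd. pose proof (le_2_INR d Hd). pose proof (pos_INR k).
  unfold rho_coef. apply Rmult_le_pos; [apply pow_le, pow2_ge_0 |].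
  apply Rlt_le, Rinv_0_lt_compat, Rmult_lt_0_compat; [apply lt_0_INR, lt_O_fact |].
  apply Gamma_pos. lra.
Qed.

(* Since [Gamma >= exp (-2)] on [[1, +oo)], the series is dominated by [exp 2 * exp z]. *)
Lemma ex_series_pow_div_fact_Gamma z a : 0 <= z -> 1 <= a ->
  ex_series (fun k => z ^ k / (INR (fact k) * Gamma (INR k + a))).
Proof.
  intros Hz Ha.
  apply (ex_series_le (K := R_AbsRing) (V := R_CompleteNormedModule) _
           (fun k => exp 2 * (z ^ k / INR (fact k)))).
  - intros k. pose proof (pos_INR k).
    assert (HG : exp (-2) <= Gamma (INR k + a)) by (apply Gamma_ge_exp_m2; lra).
    assert (HF : 0 < INR (fact k)) by apply lt_0_INR, lt_O_fact.
    assert (Hq : 0 <= z ^ k / INR (fact k))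
      by (apply Rmult_le_pos; [now apply pow_le | now apply Rlt_le, Rinv_0_lt_compat]).
    assert (HiG : / Gamma (INR k + a) <= exp 2).
    { rewrite <- (Rinv_inv (exp 2)), <- exp_Ropp.
      apply Rinv_le_contravar; [apply exp_pos | exact HG]. }
    change (Rabs (z ^ k / (INR (fact k) * Gamma (INR k + a))) <= exp 2 * (z ^ k / INR (fact k))).
    replace (z ^ k / (INR (fact k) * Gamma (INR k + a)))
      with (z ^ k / INR (fact k) * / Gamma (INR k + a)) by (unfold Rdiv; rewrite Rinv_mult; ring).
    rewrite Rabs_pos_eq, (Rmult_comm (exp 2)).
    + now apply Rmult_le_compat_l.
    + apply Rmult_le_pos; [exact Hq |]. apply Rlt_le, Rinv_0_lt_compat, Gamma_pos; lra.
  - exists (exp 2 * exp z).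
    apply (is_series_scal_l (V := R_NormedModule)).
    eapply is_series_ext; [| apply (is_exp_Reals z)]. intros n. now rewrite pow_n_pow.
Qed.

Lemma ex_series_rho_coef d w v X : (2 <= d)%nat -> 0 <= X ->
  ex_series (fun k => rho_coef d w v k * X ^ k).
Proof.
  intros Hd HX.
  apply (ex_series_ext (fun k => ((v * w / 2) ^ 2 * X) ^ k / (INR (fact k) * Gamma (INR k + INR d / 2)))).
  - intros k. unfold rho_coef. rewrite Rpow_mult_distr. unfold Rdiv. simpl. ring.
  - apply ex_series_pow_div_fact_Gamma; [apply Rmult_le_pos; [apply pow2_ge_0 | exact HX] |].
    pose proof (le_2_INR d Hd). lra.
Qed.

Lemma is_series_pair_moment d w v u : (2 <= d)%nat ->
  is_series (fun k => rho_coef d w v k * pair_moment d u k)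
            (offdiag_sum d (fun i j => Series (rho_term d w v (vadd (u i) (u j))))).
Proof.
  intros Hd.
  apply (is_series_ext (fun k => offdiag_sum d (fun i j =>
           rho_coef d w v k * dot d (vadd (u i) (u j)) (vadd (u i) (u j)) ^ k))).
  - intros k. apply offdiag_sum_scal_l.
  - apply is_series_offdiag_sum. intros i j _ _.
    rewrite (Series_ext _ _ (rho_term_eq d w v _)).
    apply Series_correct, ex_series_rho_coef, dot_self_nonneg. exact Hd.
Qed.

Lemma rho_eq_Series d w v u : (2 <= d)%nat ->
  rho d w v u = Gamma (INR d / 2) / (INR d * (INR d - 1))
                * Series (fun k => rho_coef d w v k * pair_moment d u k).
Proof. intros Hd. rewrite (is_series_unique _ _ (is_series_pair_moment d w v u Hd)). reflexivity. Qed.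

Theorem lemmaA1 (d : nat) (w v : R) :
  (2 <= d)%nat -> 0 < w -> 0 <= v ->
  (exists s, simplex_ensemble d s) /\
  (forall s u : nat -> nat -> R,
     simplex_ensemble d s -> unit_ensemble d u ->
     rho d w v s <= rho d w v u).
Proof.
  (* [w] and [v] enter only through even powers. *)
  intros Hd _ _. split; [exists (simplex_vertex d); now apply simplex_vertex_ensemble |].
  intros s u Hs Hu. pose proof (le_2_INR d Hd) as HD.
  rewrite !rho_eq_Series by exact Hd.
  apply Rmult_le_compat_l.
  - apply Rmult_le_pos; [apply Rlt_le, Gamma_pos; lra |].
    apply Rlt_le, Rinv_0_lt_compat. nra.
  - apply Series_le; [| eexists; now apply is_series_pair_moment].
    intros k. rewrite pair_moment_simplex by assumption.
    pose proof (rho_coef_nonneg d w v k Hd).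
    pose proof (pair_moment_ge d u k Hd Hu).
    assert (0 <= INR d * (INR d - 1) * simplex_pair_sqnorm d ^ k)
      by (apply Rmult_le_pos; [nra | now apply pow_le, simplex_pair_sqnorm_nonneg]).
    split; [now apply Rmult_le_pos | now apply Rmult_le_compat_l].
Qed.
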